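(* Consider Algorithm iR2N (described in the context) and suppose (A5) and (A6) hold. Let $\epsilon>0$ and let $k$ be an iteration with $\nu_k^{-1}\|\hat s_{k,\mathrm{cp}}\|<\epsilon$. Then there exists $s_{k,\mathrm{cp}}\in\operatorname{argmin}_s m_{\mathrm{cp}}(s;x_k,\nu_k^{-1})$ satisfying the inequality in (A5) (i.e., $\|\hat s_{k,\mathrm{cp}}\|\ge\kappa_s\|s_{k,\mathrm{cp}}\|$) such that $\|s_{k,\mathrm{cp}}\|<\kappa_s^{-1}\nu_{\max}\epsilon$, and there exists $u_k\in\nabla f(x_k)+\partial\psi(s_{k,\mathrm{cp}};x_k)$ with $$\|u_k\|<\big(\kappa_\nabla\theta_2\nu_{\max}+\kappa_s^{-1}\big)\epsilon,$$ where $\nu_{\max}=\theta_1/\sigma_{\min}$.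
   Context: Setting. $f:\mathbb{R}^n\to\mathbb{R}$ is continuously differentiable, $h:\mathbb{R}^n\to\mathbb{R}\cup\{+\infty\}$ is proper and lower semicontinuous; the problem is $\min_x f(x)+h(x)$. $\|\cdot\|$ is the Euclidean norm (spectral norm for matrices). For each $x$, approximations $\hat f(x)\in\mathbb{R}$ of $f(x)$ and $\hat\nabla f(x)\in\mathbb{R}^n$ of $\nabla f(x)$ are available. For each $x$, $\psi(\cdot;x):\mathbb{R}^n\to\mathbb{R}\cup\{+\infty\}$ is proper, lsc, satisfies $\psi(0;x)=h(x)$ and $\partial\psi(0;x)\subseteq\partial h(x)$ ($\partial$ = limiting subdifferential), and is uniformly prox-bounded: there is $\lambda>0$ such that for every $x$ and every $0<\lambda'<\lambda$, $w\mapsto\psi(w;x)+\tfrac{1}{2\lambda'}\|w\|^2$ is bounded below. Models: $\varphi_{\mathrm{cp}}(s;x)=\hat f(x)+\hat\nabla f(x)^Ts$; $m_{\mathrm{cp}}(s;x,\nu^{-1})=\varphi_{\mathrm{cp}}(s;x)+\tfrac12\nu^{-1}\|s\|^2+\psi(s;x)$; for a symmetric $B(x)\in\mathbb{R}^{n\times n}$, $\varphi(s;x)=\hat f(x)+\hat\nabla f(x)^Ts+\tfrac12 s^TB(x)s$ and $m(s;x,\sigma)=\varphi(s;x)+\tfrac12\sigma\|s\|^2+\psi(s;x)$. Algorithm iR2N. Constants: $\kappa_f,\kappa_\nabla>0$, $0<\gamma_3\le 1<\gamma_1\le\gamma_2$, $0<\hat\eta_1\le\hat\eta_2<1$, $0<\theta_1<1<\theta_2$,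 $\sigma_{\min}>4\kappa_f\theta_1\theta_2^2/(\hat\eta_1(1-\theta_1))$, $\sigma_0\ge\sigma_{\min}$, $x_0\in\mathbb{R}^n$. At iteration $k=0,1,\dots$: choose symmetric $B_k=B(x_k)$; set $\nu_k=\theta_1/(\|B_k\|+\sigma_k)$; compute $\hat s_{k,\mathrm{cp}}$ with $m_{\mathrm{cp}}(\hat s_{k,\mathrm{cp}};x_k,\nu_k^{-1})\le m_{\mathrm{cp}}(0;x_k,\nu_k^{-1})$ (an approximate minimizer of $m_{\mathrm{cp}}(\cdot;x_k,\nu_k^{-1})$ obtained by a descent procedure from $s=0$); compute $s_k$ with $m(s_k;x_k,\sigma_k)\le m(\hat s_{k,\mathrm{cp}};x_k,\sigma_k)$; if $\|s_k\|>\theta_2\|\hat s_{k,\mathrm{cp}}\|$, reset $s_k=\hat s_{k,\mathrm{cp}}$ (these computations are repeated with refined $\hat f,\hat\nabla f$ until (A6) holds). Compute $$\hat\rho_k=\frac{\hat f(x_k)+h(x_k)-\hat f(x_k+s_k)-h(x_k+s_k)}{\varphi(0;x_k)+\psi(0;x_k)-\varphi(s_k;x_k)-\psi(s_k;x_k)},$$ where $\varphi(\cdot;x_k)$ uses $B_k$. If $\hat\rho_k\ge\hat\eta_1$ set $x_{k+1}=x_k+s_k$, else $x_{k+1}=x_k$. Choose $\sigma_{k+1}\in[\gamma_3\sigma_k,\sigma_k]$ if $\hat\rho_k\ge\hat\eta_2$, $\sigma_{k+1}\in[\sigma_k,\gamma_1\sigma_k]$ if $\hat\eta_1\le\hat\rho_k<\hat\eta_2$,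 $\sigma_{k+1}\in[\gamma_1\sigma_k,\gamma_2\sigma_k]$ if $\hat\rho_k<\hat\eta_1$; then reset $\sigma_{k+1}=\max(\sigma_{k+1},\sigma_{\min})$. Assumptions. (A5) There is $\kappa_s\in(0,1]$ such that for all $k$ the set $\operatorname{argmin}_s m_{\mathrm{cp}}(s;x_k,\nu_k^{-1})$ (the set of exact Cauchy steps, equal to $\mathrm{prox}_{\nu_k\psi(\cdot;x_k)}(-\nu_k\hat\nabla f(x_k))$) is nonempty and $\|\hat s_{k,\mathrm{cp}}\|\ge\kappa_s\min\{\|s\|\mid s\in\operatorname{argmin}_{s'} m_{\mathrm{cp}}(s';x_k,\nu_k^{-1})\}$. (A6) For all $k$: $|f(x_k)-\hat f(x_k)|\le\kappa_f\|s_k\|^2$, $|f(x_k+s_k)-\hat f(x_k+s_k)|\le\kappa_f\|s_k\|^2$, $\|\nabla f(x_k)-\hat\nabla f(x_k)\|\le\kappa_\nabla\|s_k\|$. *)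

From HB Require Import structures.
From mathcomp Require Import all_boot all_order all_algebra.
From mathcomp Require Import boolp classical_sets reals constructive_ereal.
Set Implicit Arguments. Unset Strict Implicit. Unset Printing Implicit Defensive.
Import Order.TTheory GRing.Theory Num.Theory.
Local Open Scope ring_scope.
Local Open Scope classical_set_scope.

Section Defs.
Variables (R : realType) (n : nat).
Local Notation vec := 'cV[R]_n.

Definition dot (u v : vec) : R := \sum_(i < n) u i 0 * v i 0.
Definition enorm (v : vec) : R := Num.sqrt (\sum_(i < n) (v i 0) ^+ 2).

Definition opnorm (B : 'M[R]_n) : R :=
  sup [set enorm (B *m v) | v in [set v : vec | enorm v <= 1]].

Definition quadf (B : 'M[R]_n) (s : vec) : R := ((s^T *m B) *m s) 0 0.

Definition symmetric_mx (B : 'M[R]_n) : Prop := B^T = B.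

Definition is_gradient (f : vec -> R) (g : vec -> vec) : Prop :=
  forall x e, 0 < e -> exists d, 0 < d /\ forall y, enorm (y - x) < d ->
    `|f y - f x - dot (g x) (y - x)| <= e * enorm (y - x).

Definition continuous_map (g : vec -> vec) : Prop :=
  forall x e, 0 < e -> exists d, 0 < d /\ forall y, enorm (y - x) < d ->
    enorm (g y - g x) < e.

Definition C1_with_gradient (f : vec -> R) (g : vec -> vec) : Prop :=
  is_gradient f g /\ continuous_map g.

Definition proper_fun (g : vec -> \bar R) : Prop :=
  (forall x, g x != -oo%E) /\ exists x, g x \is a fin_num.

Definition lsc (g : vec -> \bar R) : Prop :=
  forall x (a : R), (a%:E < g x)%E -> exists d, 0 < d /\
    forall y, enorm (y - x) < d -> (a%:E < g y)%E.

Definition frechet_subdiff (g : vec -> \bar R) (x v : vec) : Prop :=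
  g x \is a fin_num /\
  forall e, 0 < e -> exists d, 0 < d /\ forall y, enorm (y - x) < d ->
    ((fine (g x) + dot v (y - x) - e * enorm (y - x))%:E <= g y)%E.

Definition limiting_subdiff (g : vec -> \bar R) (x v : vec) : Prop :=
  g x \is a fin_num /\
  exists (xs vs : nat -> vec),
    (forall j, frechet_subdiff g (xs j) (vs j)) /\
    (forall e, 0 < e -> exists N : nat, forall j, (N <= j)%N ->
       [/\ enorm (xs j - x) < e,
           `|fine (g (xs j)) - fine (g x)| < e &
           enorm (vs j - v) < e]).

Definition unif_prox_bounded (psi : vec -> vec -> \bar R) : Prop :=
  exists lam : R, 0 < lam /\ forall x (lam' : R), 0 < lam' -> lam' < lam ->
    exists b : R, forall w,
      (b%:E <= psi x w + (enorm w ^+ 2 / (2 * lam'))%:E)%E.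

Definition is_argmin (g : vec -> \bar R) (s : vec) : Prop :=
  forall s', (g s <= g s')%E.

(* Cauchy model m_cp(s; x, nuinv) with data fh ~ f(x), gh ~ grad f(x),
   psix = psi(.; x) *)
Definition mcp_model (fh : R) (gh : vec) (psix : vec -> \bar R) (nuinv : R)
  (s : vec) : \bar R :=
  ((fh + dot gh s + 2^-1 * nuinv * enorm s ^+ 2)%:E + psix s)%E.

Definition phi_model (fh : R) (gh : vec) (B : 'M[R]_n) (s : vec) : R :=
  fh + dot gh s + 2^-1 * quadf B s.

Definition m_model (fh : R) (gh : vec) (B : 'M[R]_n) (psix : vec -> \bar R)
  (sigma : R) (s : vec) : \bar R :=
  ((phi_model fh gh B s + 2^-1 * sigma * enorm s ^+ 2)%:E + psix s)%E.

End Defs.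

Definition iR2N_nu (R : realType) (n : nat) (theta1 : R) (Bk : 'M[R]_n)
  (sigmak : R) : R := theta1 / (opnorm Bk + sigmak).

(* At iteration k:
   fhat k, ghat k : the (final, refined) approximations of f, grad f used at
   iteration k; shat k : the approximate Cauchy step; t k : the step computed
   from the model m before the safeguard; s k : the step actually used. *)
Definition iR2N_run (R : realType) (n : nat)
  (h : 'cV[R]_n -> \bar R) (psi : 'cV[R]_n -> 'cV[R]_n -> \bar R)
  (B : 'cV[R]_n -> 'M[R]_n)
  (gamma1 gamma2 gamma3 eta1 eta2 theta1 theta2 sigma_min : R)
  (fhat : nat -> 'cV[R]_n -> R) (ghat : nat -> 'cV[R]_n -> 'cV[R]_n)
  (x : nat -> 'cV[R]_n) (sigma : nat -> R)
  (shat t s : nat -> 'cV[R]_n) : Prop :=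
  sigma 0%N >= sigma_min /\
  forall k : nat,
    let Bk := B (x k) in
    let nuk := iR2N_nu theta1 Bk (sigma k) in
    let fk := fhat k (x k) in
    let gk := ghat k (x k) in
    let psik := psi (x k) in
    [/\ symmetric_mx Bk,
      (mcp_model fk gk psik nuk^-1 (shat k) <= mcp_model fk gk psik nuk^-1 0)%E,
      (m_model fk gk Bk psik (sigma k) (t k)
         <= m_model fk gk Bk psik (sigma k) (shat k))%E,
      s k = (if enorm (t k) > theta2 * enorm (shat k) then shat k else t k) &
      let num := fine ((fk - fhat k (x k + s k))%:E
                        + (h (x k) - h (x k + s k)%R))%E in
      let den := fine (((phi_model fk gk Bk 0 - phi_model fk gk Bk (s k))%:E)
                        + (psik 0%R - psik (s k)))%E in
      let rho := num / den in
      [/\ x k.+1 = (if rho >= eta1 then x k + s k else x k) &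
          exists sig' : R,
            [/\ (rho >= eta2 -> gamma3 * sigma k <= sig' <= sigma k),
                (eta1 <= rho < eta2 -> sigma k <= sig' <= gamma1 * sigma k),
                (rho < eta1 -> gamma1 * sigma k <= sig' <= gamma2 * sigma k) &
                sigma k.+1 = Num.max sig' sigma_min]]].

Definition assumption_A5 (R : realType) (n : nat)
  (psi : 'cV[R]_n -> 'cV[R]_n -> \bar R) (B : 'cV[R]_n -> 'M[R]_n) (theta1 : R)
  (fhat : nat -> 'cV[R]_n -> R) (ghat : nat -> 'cV[R]_n -> 'cV[R]_n)
  (x : nat -> 'cV[R]_n) (sigma : nat -> R) (shat : nat -> 'cV[R]_n)
  (kappa_s : R) : Prop :=
  0 < kappa_s <= 1 /\
  forall k : nat,
    let nuk := iR2N_nu theta1 (B (x k)) (sigma k) in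
    let M := mcp_model (fhat k (x k)) (ghat k (x k)) (psi (x k)) nuk^-1 in
    exists s0, [/\ is_argmin M s0,
      (forall s', is_argmin M s' -> enorm s0 <= enorm s') &
      enorm (shat k) >= kappa_s * enorm s0].

Definition assumption_A6 (R : realType) (n : nat)
  (f : 'cV[R]_n -> R) (gradf : 'cV[R]_n -> 'cV[R]_n)
  (kappa_f kappa_g : R)
  (fhat : nat -> 'cV[R]_n -> R) (ghat : nat -> 'cV[R]_n -> 'cV[R]_n)
  (x : nat -> 'cV[R]_n) (s : nat -> 'cV[R]_n) : Prop :=
  forall k : nat,
    [/\ `|f (x k) - fhat k (x k)| <= kappa_f * enorm (s k) ^+ 2,
        `|f (x k + s k) - fhat k (x k + s k)| <= kappa_f * enorm (s k) ^+ 2 &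
        enorm (gradf (x k) - ghat k (x k)) <= kappa_g * enorm (s k)].

(* The point s_cp is the minimal-norm exact Cauchy step of (A5), so
   kappa_s |s_cp| <= |shat_k| < nu_k eps <= nu_max eps.  Fermat's rule for the
   Cauchy model at its minimiser s_cp gives the Frechet, hence limiting,
   subgradient w = -(ghat + nu_k^-1 s_cp) of psi(.; x_k) at s_cp.  Then
   u = grad f(x_k) + w = (grad f(x_k) - ghat) - nu_k^-1 s_cp, and (A6) with the
   safeguard |s_k| <= theta2 |shat_k| bounds the first term by
   kappa_g theta2 nu_max eps, while nu_k^-1 |s_cp| <= nu_k^-1 |shat_k| / kappa_s
   < eps / kappa_s. *)
From HB Require Import structures.
From mathcomp Require Import all_boot all_order all_algebra.
From mathcomp Require Import boolp classical_sets reals constructive_ereal.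
From mathcomp Require Import lra.
Import Order.TTheory GRing.Theory Num.Theory.
Local Open Scope ring_scope.

Set Implicit Arguments.

Section Euclidean.
Context {R : realType} {n : nat}.
Implicit Types (u v w : 'cV[R]_n).

Lemma dotC u v : dot u v = dot v u.
Proof. by apply: eq_bigr => i _; rewrite mulrC. Qed.

Lemma dotDl u v w : dot (u + v) w = dot u w + dot v w.
Proof. by rewrite /dot -big_split; apply: eq_bigr => i _; rewrite mxE mulrDl. Qed.

Lemma dotDr u v w : dot w (u + v) = dot w u + dot w v.
Proof. by rewrite dotC dotDl !(dotC w). Qed.

Lemma dotZl (c : R) u v : dot (c *: u) v = c * dot u v.
Proof. by rewrite /dot mulr_sumr; apply: eq_bigr => i _; rewrite mxE mulrA. Qed.

Lemma dotNl u v : dot (- u) v = - dot u v.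
Proof. by rewrite -scaleN1r dotZl mulN1r. Qed.

Lemma dotNr u v : dot v (- u) = - dot v u.
Proof. by rewrite dotC dotNl dotC. Qed.

Lemma enorm_ge0 u : 0 <= enorm u.
Proof. exact: sqrtr_ge0. Qed.

Lemma enorm_sqr u : enorm u ^+ 2 = dot u u.
Proof.
rewrite /enorm sqr_sqrtr; last by apply: sumr_ge0 => i _; rewrite sqr_ge0.
by apply: eq_bigr => i _; rewrite expr2.
Qed.

Lemma enorm0 : enorm (0 : 'cV[R]_n) = 0.
Proof. by rewrite /enorm big1 ?sqrtr0 // => i _; rewrite mxE expr0n. Qed.

Lemma enorm_eq0 u : enorm u = 0 -> forall i, u i 0 = 0.
Proof.
rewrite /enorm => /eqP; rewrite sqrtr_eq0 => le_sum0 i.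
have sum0 : \sum_(j < n) u j 0 ^+ 2 = 0.
  by apply/eqP; rewrite eq_le le_sum0 sumr_ge0 // => j _; rewrite sqr_ge0.
have /eqP := @psumr_eq0P _ _ xpredT _ (fun j _ => sqr_ge0 (u j 0)) sum0 i isT.
by rewrite sqrf_eq0 => /eqP.
Qed.

Lemma enormZ (c : R) u : enorm (c *: u) = `|c| * enorm u.
Proof.
rewrite /enorm -sqrtr_sqr -sqrtrM ?sqr_ge0 // mulr_sumr; congr Num.sqrt.
by apply: eq_bigr => i _; rewrite mxE exprMn.
Qed.

Lemma enormN u : enorm (- u) = enorm u.
Proof. by rewrite -scaleN1r enormZ normrN1 mul1r. Qed.

Lemma dot_le_enorm u v : dot u v <= enorm u * enorm v.
Proof.
have [u0|u_neq0] := eqVneq (enorm u) 0.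
  by rewrite u0 mul0r /dot big1 // => i _; rewrite (enorm_eq0 u u0) mul0r.
have [v0|v_neq0] := eqVneq (enorm v) 0.
  by rewrite v0 mulr0 /dot big1 // => i _; rewrite (enorm_eq0 v v0) mulr0.
have u_gt0 : 0 < enorm u by rewrite lt_neqAle eq_sym u_neq0 enorm_ge0.
have v_gt0 : 0 < enorm v by rewrite lt_neqAle eq_sym v_neq0 enorm_ge0.
have := sqr_ge0 (enorm (enorm v *: u - enorm u *: v)).
rewrite enorm_sqr !(dotDl, dotDr, dotNl, dotNr, dotZl) !(dotC _ (_ *: _)) !dotZl.
rewrite -!enorm_sqr (dotC v u) => expand_ge0.
have : 0 <= enorm u * enorm v * (enorm u * enorm v - dot u v) by nra.
by rewrite pmulr_rge0 ?mulr_gt0 // subr_ge0.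
Qed.

Lemma enormD u v : enorm (u + v) <= enorm u + enorm v.
Proof.
rewrite -[enorm u + _]ger0_norm ?addr_ge0 ?enorm_ge0 // -sqrtr_sqr.
have -> : enorm (u + v) = Num.sqrt (enorm (u + v) ^+ 2).
  by rewrite sqrtr_sqr ger0_norm ?enorm_ge0.
rewrite ler_sqrt ?sqr_ge0 //.
rewrite enorm_sqr dotDl !dotDr (dotC v u) -!enorm_sqr.
by have := dot_le_enorm u v; nra.
Qed.

Lemma opnorm_ge0 (B : 'M[R]_n) : 0 <= opnorm B.
Proof.
rewrite /opnorm; set E := (X in sup X).
have E0 : E 0 by exists 0; rewrite /= ?mulmx0 enorm0.
have [ubE|not_ubE] := pselect (has_ubound E); first exact: ub_le_sup E0.
by rewrite sup_out // => -[].
Qed.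

End Euclidean.

Section CauchyModel.
Context {R : realType} {n : nat}.
Implicit Types (g : 'cV[R]_n -> \bar R) (x v : 'cV[R]_n).

Lemma frechet_subdiff_limiting g x v :
  frechet_subdiff g x v -> limiting_subdiff g x v.
Proof.
move=> gx_v; split; first by case: gx_v.
exists (fun=> x), (fun=> v); split=> // e e_gt0; exists 0%N => j _.
by rewrite !subrr enorm0 normr0.
Qed.

Variables (fh : R) (gh : 'cV[R]_n) (psix : 'cV[R]_n -> \bar R) (c : R).
Hypotheses (psix_proper : proper_fun psix) (c_gt0 : 0 < c).

Lemma mcp_argmin_fin_num s0 :
  is_argmin (mcp_model fh gh psix c) s0 -> psix s0 \is a fin_num.
Proof.
case: psix_proper => psix_neq_ninfty [z psix_z] /(_ z).
have := psix_neq_ninfty s0; rewrite /mcp_model.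
by case: (psix s0) => // _; move: psix_z; case: (psix z).
Qed.

(* Fermat's rule: 0 lies in the subdifferential of the Cauchy model. *)
Lemma mcp_argmin_frechet_subdiff s0 :
  is_argmin (mcp_model fh gh psix c) s0 ->
  frechet_subdiff psix s0 (- (gh + c *: s0)).
Proof.
move=> s0_min; have psix_s0 := mcp_argmin_fin_num s0_min.
split=> // e e_gt0; exists (2 * e / c); split; first by rewrite divr_gt0 ?mulr_gt0.
move=> y; have -> : y = s0 + (y - s0) by rewrite addrC subrK.
move: (y - s0) => d; rewrite [s0 + d]addrC addrK => d_lt.
have := s0_min (d + s0); rewrite /mcp_model -(fineK psix_s0) /=.
have := psix_proper.1 (d + s0).
case: (psix (d + s0)) => [py _| _ _|//]; last by rewrite leey.
rewrite -!EFinD !lee_fin; have d_ge0 := enorm_ge0 d.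
have cd_lt : c * enorm d < 2 * e by rewrite -ltr_pdivlMl // mulrC.
have quad_le : 2^-1 * c * dot d d <= e * enorm d.
  have cd_ge0 : 0 <= 2 * e - c * enorm d by rewrite subr_ge0 ltW.
  by rewrite -enorm_sqr; have := mulr_ge0 d_ge0 cd_ge0; nra.
rewrite !enorm_sqr dotDr !dotDl !dotDr dotNl dotDl dotZl (dotC d s0).
lra.
Qed.

End CauchyModel.

Section IR2NRun.
Variables (R : realType) (n : nat) (h : 'cV[R]_n -> \bar R)
  (psi : 'cV[R]_n -> 'cV[R]_n -> \bar R) (B : 'cV[R]_n -> 'M[R]_n)
  (gamma1 gamma2 gamma3 eta1 eta2 theta1 theta2 sigma_min : R)
  (fhat : nat -> 'cV[R]_n -> R) (ghat : nat -> 'cV[R]_n -> 'cV[R]_n)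
  (x : nat -> 'cV[R]_n) (sigma : nat -> R) (shat t s : nat -> 'cV[R]_n).
Hypothesis run : iR2N_run h psi B gamma1 gamma2 gamma3 eta1 eta2 theta1
  theta2 sigma_min fhat ghat x sigma shat t s.

Lemma iR2N_sigma_ge k : sigma_min <= sigma k.
Proof.
case: run => sigma0_ge step; case: k => // k.
by have [_ _ _ _ [_ [sig' [_ _ _ ->]]]] := step k; rewrite le_max lexx orbT.
Qed.

Lemma iR2N_step_le k : 1 <= theta2 -> enorm (s k) <= theta2 * enorm (shat k).
Proof.
move=> theta2_ge1; case: run => _ /(_ k) [_ _ _ -> _].
case: ifP => [_|/negbT]; last by rewrite -leNgt.
by rewrite ler_peMl ?enorm_ge0.
Qed.

End IR2NRun.

Lemma iR2N_nu_gt0 (R : realType) (n : nat) (theta1 sigma : R) (B : 'M[R]_n) :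
  0 < theta1 -> 0 < sigma -> 0 < iR2N_nu theta1 B sigma.
Proof.
by move=> theta1_gt0 sigma_gt0; rewrite divr_gt0 ?ltr_wpDl ?opnorm_ge0.
Qed.

Lemma iR2N_nu_le (R : realType) (n : nat) (theta1 sigma_min sigma : R)
  (B : 'M[R]_n) :
  0 < theta1 -> 0 < sigma_min -> sigma_min <= sigma ->
  iR2N_nu theta1 B sigma <= theta1 / sigma_min.
Proof.
move=> theta1_gt0 smin_gt0 smin_le; have opB_ge0 := opnorm_ge0 B.
rewrite /iR2N_nu ler_pM2l // lef_pV2 ?posrE //; lra.
Qed.

Theorem theorem3p8 (R : realType) (n : nat)
  (f : 'cV[R]_n -> R) (gradf : 'cV[R]_n -> 'cV[R]_n)
  (h : 'cV[R]_n -> \bar R) (psi : 'cV[R]_n -> 'cV[R]_n -> \bar R)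
  (B : 'cV[R]_n -> 'M[R]_n)
  (kappa_f kappa_g kappa_s gamma1 gamma2 gamma3 eta1 eta2 theta1 theta2
     sigma_min : R)
  (fhat : nat -> 'cV[R]_n -> R) (ghat : nat -> 'cV[R]_n -> 'cV[R]_n)
  (x : nat -> 'cV[R]_n) (sigma : nat -> R)
  (shat t s : nat -> 'cV[R]_n) :
  C1_with_gradient f gradf ->
  proper_fun h -> lsc h ->
  (forall y, proper_fun (psi y)) -> (forall y, lsc (psi y)) ->
  (forall y, psi y 0 = h y) ->
  (forall y v, limiting_subdiff (psi y) 0 v -> limiting_subdiff h y v) ->
  unif_prox_bounded psi ->
  0 < kappa_f -> 0 < kappa_g ->
  0 < gamma3 <= 1 -> 1 < gamma1 <= gamma2 ->
  0 < eta1 <= eta2 -> eta2 < 1 ->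
  0 < theta1 < 1 -> 1 < theta2 ->
  sigma_min > 4 * kappa_f * theta1 * theta2 ^+ 2 / (eta1 * (1 - theta1)) ->
  iR2N_run h psi B gamma1 gamma2 gamma3 eta1 eta2 theta1 theta2 sigma_min
    fhat ghat x sigma shat t s ->
  assumption_A5 psi B theta1 fhat ghat x sigma shat kappa_s ->
  assumption_A6 f gradf kappa_f kappa_g fhat ghat x s ->
  forall (eps : R) (k : nat), 0 < eps ->
  let nuk := iR2N_nu theta1 (B (x k)) (sigma k) in
  let nu_max := theta1 / sigma_min in
  nuk^-1 * enorm (shat k) < eps ->
  exists scp : 'cV[R]_n,
    [/\ is_argmin (mcp_model (fhat k (x k)) (ghat k (x k)) (psi (x k)) nuk^-1) scp,
        kappa_s * enorm scp <= enorm (shat k),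
        enorm scp < kappa_s^-1 * nu_max * eps &
        exists u : 'cV[R]_n,
          (exists w, limiting_subdiff (psi (x k)) scp w /\ u = gradf (x k) + w) /\
          enorm u < (kappa_g * theta2 * nu_max + kappa_s^-1) * eps].
Proof.
move=> _ _ _ psi_proper _ _ _ _ kf_gt0 kg_gt0 _ _ /andP[eta1_gt0 _] _
  /andP[theta1_gt0 theta1_lt1] theta2_gt1 smin_gt run A5 A6 eps k eps_gt0
  nuk nu_max shat_lt.
have smin_gt0 : 0 < sigma_min.
  apply: le_lt_trans smin_gt; rewrite divr_ge0 ?exprn_ge0 ?mulr_ge0 //; lra.
have sigma_ge := iR2N_sigma_ge run k.
have nuk_gt0 : 0 < nuk by apply: iR2N_nu_gt0; lra.
have nuk_le : nuk <= nu_max by exact: iR2N_nu_le.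
have shat_lt' : enorm (shat k) < nuk * eps.
  have := shat_lt; rewrite -(ltr_pM2l nuk_gt0).
  by rewrite mulrA divff ?gt_eqF // mul1r.
have [/andP[ks_gt0 _] /(_ k) [scp [scp_min _ ks_scp]]] := A5.
have nuinv_gt0 : 0 < nuk^-1 by rewrite invr_gt0.
have scp_frechet := mcp_argmin_frechet_subdiff (psi_proper (x k)) nuinv_gt0
  scp_min.
have nuinv_scp : nuk^-1 * enorm scp < kappa_s^-1 * eps.
  rewrite ltr_pdivlMl // mulrCA; apply: le_lt_trans shat_lt.
  by rewrite ler_pM2l ?invr_gt0.
have step_le := iR2N_step_le run k (ltW theta2_gt1).
have [_ _ grad_err] := A6 k.
exists scp; split=> //.
  rewrite -mulrA ltr_pdivlMl //; apply: le_lt_trans ks_scp _.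
  by apply: lt_le_trans shat_lt' _; rewrite ler_pM2r.
exists (gradf (x k) - (ghat k (x k) + nuk^-1 *: scp)); split.
  exists (- (ghat k (x k) + nuk^-1 *: scp)).
  by split=> //; exact: frechet_subdiff_limiting.
rewrite opprD addrA; apply: le_lt_trans (enormD _ _) _.
rewrite enormN enormZ ger0_norm ?invr_ge0 ?ltW //.
rewrite mulrDl; apply: ler_ltD => //.
apply: le_trans grad_err _; rewrite -!mulrA ler_pM2l //.
apply: le_trans step_le _; rewrite ler_pM2l; last lra.
by apply: le_trans (ltW shat_lt') _; rewrite mulrA ler_pM2r.
Qed.
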